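(* Let $\mathcal H=(V,E)$ be a hypergraph with splitting functions and let $R\subseteq V$ with $\mathrm{vol}(R)>0$ and $\mathrm{vol}(\bar R)>0$. Let $\varepsilon\ge\varepsilon_0=\mathrm{vol}(R)/\mathrm{vol}(\bar R)$. Then for every $S\subseteq V$ with $\Omega_{R,\varepsilon}(S)>0$, we have $\mathrm{vol}(S)>0$, $\mathrm{vol}(\bar S)>0$, and $$\frac{\mathrm{vol}(\bar R)}{\mathrm{vol}(V)}\,\mathrm{ncut}(S)\le\mathrm{HLC}(S).$$
   Context: A hypergraph $\mathcal H=(V,E)$ has a finite node set $V$, and each hyperedge $e\in E$ is a subset of $V$. Each hyperedge $e$ carries a splitting function $w_e:2^e\to\mathbb R_{\ge0}$ satisfying $w_e(A)=w_e(e\setminus A)$ for all $A\subseteq e$ and $w_e(\emptyset)=w_e(e)=0$. For $S\subseteq V$, $\mathrm{cut}_{\mathcal H}(S)=\sum_{e\in E}w_e(e\cap S)$. The degree of $v$ is $d_v=\sum_{e\ni v}w_e(\{v\})$, and $\mathrm{vol}(S)=\sum_{v\in S}d_v$. Write $\bar S=V\setminus S$. Hypergraph normalized cut is $\mathrm{ncut}(S)=\frac{\mathrm{cut}_{\mathcal H}(S)}{\mathrm{vol}(S)}+\frac{\mathrm{cut}_{\mathcal H}(\bar S)}{\mathrm{vol}(\bar S)}$. Define $\Omega_{R,\varepsilon}(S)=\mathrm{vol}(S\cap R)-\varepsilon\,\mathrm{vol}(S\cap\bar R)$. Set $\mathrm{HLC}(S)=\mathrm{cut}_{\mathcal H}(S)/\Omega_{R,\varepsilon}(S)$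 if $\Omega_{R,\varepsilon}(S)>0$, and $\mathrm{HLC}(S)=\infty$ otherwise. *)

From HB Require Import structures.
From mathcomp Require Import all_boot all_order all_algebra.
Set Implicit Arguments. Unset Strict Implicit. Unset Printing Implicit Defensive.
Import Order.TTheory GRing.Theory Num.Theory.
Local Open Scope ring_scope.

Section Hyper.
Variables (R : realFieldType) (V : finType) (I : finType).
(* hyperedges indexed by I; e i is the node set of hyperedge i,
   w i is its splitting function (on subsets of V; only arguments A \subset e i matter) *)
Variables (e : I -> {set V}) (w : I -> {set V} -> R).

Definition splitting_functions : Prop :=
  forall i : I,
    (forall A : {set V}, A \subset e i -> 0 <= w i A) /\
    (forall A : {set V}, A \subset e i -> w i A = w i (e i :\: A)) /\
    w i set0 = 0 /\ w i (e i) = 0.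

Definition hcut (S : {set V}) : R := \sum_(i : I) w i (e i :&: S).
Definition deg (v : V) : R := \sum_(i : I | v \in e i) w i [set v].
Definition vol (S : {set V}) : R := \sum_(v in S) deg v.
Definition ncut (S : {set V}) : R := hcut S / vol S + hcut (~: S) / vol (~: S).
Definition Omega (Rs : {set V}) (eps : R) (S : {set V}) : R :=
  vol (S :&: Rs) - eps * vol (S :&: ~: Rs).
(* HLC with values in R ∪ {∞}: None stands for ∞ *)
Definition HLC (Rs : {set V}) (eps : R) (S : {set V}) : option R :=
  if 0 < Omega Rs eps S then Some (hcut S / Omega Rs eps S) else None.
End Hyper.

Definition le_ext (R : realFieldType) (x : R) (y : option R) : Prop :=
  match y with Some y' => x <= y' | None => True end.

(** Write [a, b, c, d] for the volumes of [S ∩ R], [S ∩ R̄], [S̄ ∩ R], [S̄ ∩ R̄].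
    Since [eps * vol R̄ >= vol R = a + c], the localized volume satisfies
    [Omega S * vol R̄ <= a (b + d) - b (a + c) = a d - b c <= vol S * vol S̄].
    Hence [Omega S > 0] forces [vol S, vol S̄ > 0], and by the symmetry of the
    cut [ncut S = cut S * vol V / (vol S * vol S̄)], so the scaled normalized cut
    is at most [cut S / Omega S]. *)

From HB Require Import structures.
From mathcomp Require Import all_boot all_order all_algebra.
From mathcomp Require Import ring lra.
Set Implicit Arguments. Unset Strict Implicit. Unset Printing Implicit Defensive.
Import Order.TTheory GRing.Theory Num.Theory.
Local Open Scope ring_scope.

Section HypergraphCut.
Variables (R : realFieldType) (V I : finType).
Variables (e : I -> {set V}) (w : I -> {set V} -> R).
Hypothesis Hw : splitting_functions e w.

Lemma vol_ge0 (A : {set V}) : 0 <= vol e w A.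
Proof.
apply: sumr_ge0 => v _; apply: sumr_ge0 => i vi.
by have [w_ge0 _] := Hw i; apply: w_ge0; rewrite sub1set.
Qed.

Lemma hcut_ge0 (S : {set V}) : 0 <= hcut e w S.
Proof.
by apply: sumr_ge0 => i _; have [w_ge0 _] := Hw i; apply/w_ge0/subsetIl.
Qed.

Lemma hcut_setC (S : {set V}) : hcut e w (~: S) = hcut e w S.
Proof.
apply: eq_bigr => i _; have [_ [w_sym _]] := Hw i.
rewrite [RHS]w_sym ?subsetIl //; congr (w i _).
by apply/setP => x; rewrite !inE; case: (x \in e i); case: (x \in S).
Qed.

Lemma volID (A B : {set V}) :
  vol e w A = vol e w (A :&: B) + vol e w (A :&: ~: B).
Proof. by rewrite /vol (big_setID B) setDE. Qed.

Lemma volT (S : {set V}) : vol e w [set: V] = vol e w S + vol e w (~: S).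
Proof. by rewrite (volID _ S) !setTI. Qed.

Lemma ncutE (S : {set V}) : 0 < vol e w S -> 0 < vol e w (~: S) ->
  ncut e w S = hcut e w S * vol e w [set: V] / (vol e w S * vol e w (~: S)).
Proof.
move=> volS_gt0 volSc_gt0; rewrite /ncut hcut_setC (volT S).
by field; rewrite !gt_eqF.
Qed.

Lemma Omega_mul_vol_le (Rs : {set V}) (eps : R) (S : {set V}) :
  0 < vol e w (~: Rs) -> vol e w Rs / vol e w (~: Rs) <= eps ->
  Omega e w Rs eps S * vol e w (~: Rs) <= vol e w S * vol e w (~: S).
Proof.
move=> volRc_gt0; rewrite ler_pdivrMr // /Omega.
rewrite (volID S Rs) (volID (~: S) Rs) (volID Rs S) (volID (~: Rs) S).
rewrite (setIC Rs S) (setIC Rs (~: S)) (setIC (~: Rs) S) (setIC (~: Rs) (~: S)).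
have := vol_ge0 (S :&: Rs); have := vol_ge0 (S :&: ~: Rs).
have := vol_ge0 (~: S :&: Rs); have := vol_ge0 (~: S :&: ~: Rs).
set a := vol e w (S :&: Rs); set b := vol e w (S :&: ~: Rs).
set c := vol e w (~: S :&: Rs); set d := vol e w (~: S :&: ~: Rs).
move=> d_ge0 c_ge0 b_ge0 a_ge0 eps_ge_eps0.
nra.
Qed.

Lemma vol_gt0_of_Omega_gt0 (Rs : {set V}) (eps : R) (S : {set V}) :
  0 < vol e w (~: Rs) -> vol e w Rs / vol e w (~: Rs) <= eps ->
  0 < Omega e w Rs eps S -> 0 < vol e w S /\ 0 < vol e w (~: S).
Proof.
move=> volRc_gt0 eps_ge_eps0 Omega_gt0.
have := Omega_mul_vol_le S volRc_gt0 eps_ge_eps0.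
have := vol_ge0 S; have := vol_ge0 (~: S).
have : 0 < Omega e w Rs eps S * vol e w (~: Rs) by exact: mulr_gt0.
nra.
Qed.

End HypergraphCut.

Theorem mainTheorem8 (R : realFieldType) (V I : finType)
  (e : I -> {set V}) (w : I -> {set V} -> R)
  (Hw : splitting_functions e w)
  (Rs : {set V})
  (HR : 0 < vol e w Rs) (HRc : 0 < vol e w (~: Rs))
  (eps : R) (Heps : vol e w Rs / vol e w (~: Rs) <= eps) :
  forall S : {set V}, 0 < Omega e w Rs eps S ->
    0 < vol e w S /\ 0 < vol e w (~: S) /\
    le_ext (vol e w (~: Rs) / vol e w [set: V] * ncut e w S) (HLC e w Rs eps S).
Proof.
move=> S Omega_gt0.
have [volS_gt0 volSc_gt0] := vol_gt0_of_Omega_gt0 Hw HRc Heps Omega_gt0.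
do 2!split => //; rewrite /HLC Omega_gt0 /= (ncutE Hw) //.
have volT_gt0 : 0 < vol e w [set: V] by rewrite (volT e w S); exact: addr_gt0.
have -> : vol e w (~: Rs) / vol e w [set: V] *
    (hcut e w S * vol e w [set: V] / (vol e w S * vol e w (~: S)))
  = hcut e w S * (vol e w (~: Rs) / (vol e w S * vol e w (~: S))).
  by field; rewrite !gt_eqF.
apply: ler_wpM2l; first exact: hcut_ge0 Hw S.
rewrite ler_pdivrMr ?mulr_gt0 // mulrC ler_pdivlMr //.
by rewrite mulrC; exact: Omega_mul_vol_le.
Qed.
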